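(* For integers $j\ge 1$ let $$I_j=\left[\binom{j+1}{2}^{-1},\binom{j}{2}^{-1}\right)$$ (with the convention $\binom{1}{2}^{-1}=\infty$), and for $\rho>0$ let $\alpha_j(\rho)=1/j+\rho(j-1)/2$ and $\beta_j(\rho)=1/j+\rho(j+1)/2$. Assume $\rho\in I_{j+1}$ for some $j\ge 1$, and let $\rho'=\rho/[1-\alpha_{j+1}(\rho)]$. Then (1) $\rho<\alpha_{j+1}(\rho)$; (2) $\rho'\in I_j$; (3) $\beta_j(\rho')=[1/\alpha_{j+1}(\rho)-1]^{-1}$; (4) $\alpha_{j+1}(\rho)+\rho=\beta_{j+1}(\rho)$. *)

From mathcomp Require Import all_boot all_order all_algebra.
Set Implicit Arguments. Unset Strict Implicit. Unset Printing Implicit Defensive.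
Import Order.TTheory GRing.Theory Num.Theory.
Local Open Scope ring_scope.

(* I_j = [ C(j+1,2)^{-1}, C(j,2)^{-1} ), with C(1,2)^{-1} = +infinity. *)
Definition in_I (R : realFieldType) (j : nat) (rho : R) : Prop :=
  ('C(j.+1, 2)%:R)^-1 <= rho /\ (j = 1%N \/ rho < ('C(j, 2)%:R)^-1).

Definition alpha (R : realFieldType) (j : nat) (rho : R) : R :=
  (j%:R)^-1 + rho * (j%:R - 1) / 2.

Definition beta (R : realFieldType) (j : nat) (rho : R) : R :=
  (j%:R)^-1 + rho * (j%:R + 1) / 2.

From mathcomp Require Import all_boot all_order all_algebra.
From mathcomp Require Import ring lra zify.
Set Implicit Arguments.
Unset Strict Implicit.
Unset Printing Implicit Defensive.
Import Order.TTheory GRing.Theory Num.Theory.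
Local Open Scope ring_scope.

(* For [rho > 0], [in_I j rho] says that [rho^-1] lies in (C(j,2), C(j+1,2)].
   Passing from [rho] to [rho' = rho / (1 - alpha_(j+1)(rho))] acts on
   reciprocals by the increasing affine map [x |-> j/(j+1) x - j/2], which
   sends C(j+1,2) to C(j,2) and C(j+2,2) to C(j+1,2), hence maps the interval
   of I_(j+1) onto that of I_j.  Items (3) and (4) are identities of rational
   functions. *)

Lemma natr_bin2 (R : numFieldType) (n : nat) :
  ('C(n, 2)%:R : R) = n%:R * (n%:R - 1) / 2.
Proof.
have bin2_double : (2 * 'C(n, 2) = n * n.-1)%N.
  elim: n => [|n IHn] //; rewrite binS bin1 mulnDr IHn.
  by case: n {IHn} => //= n; lia.
apply: (@mulfI _ 2); first by rewrite pnatr_eq0.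
rewrite mulrCA divff ?pnatr_eq0 // mulr1 -natrM bin2_double natrM.
by case: n {bin2_double} => [|n]; rewrite ?mul0r // -natr1 addrK.
Qed.

Section Recursion.
Context {R : realFieldType}.
Implicit Types (n : nat) (rho x : R).

Lemma in_I_invE n rho : 0 < rho ->
  in_I n rho <-> 'C(n, 2)%:R < rho^-1 <= 'C(n.+1, 2)%:R.
Proof.
move=> rho_gt0; rewrite /in_I.
have inv_gt0 : 0 < rho^-1 by rewrite invr_gt0.
case: n => [|[|n]].
- rewrite !bin_small // invr0; split=> [[_ []] | /andP[]] //; lra.
- rewrite (_ : 'C(2, 2) = 1%N) // bin_small // invr1 inv_gt0.
  rewrite -[X in X <= rho]invr1 -[rho in _ <= rho]invrK lef_pV2 ?posrE //.
  split=> [[-> _] // | /= le1]; by split; [|left].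
- have binS2_gt0 k : (0 < 'C(k.+2, 2)%:R :> R) by rewrite ltr0n bin_gt0.
  rewrite -[rho in _ <= rho]invrK -[rho in rho < _]invrK.
  rewrite lef_pV2 ?ltf_pV2 ?posrE //.
  split=> [[-> [//|->]] // | /andP[lo ->]]; by split; [|right].
Qed.

Definition inv_step n x : R := n%:R / n.+1%:R * x - n%:R / 2.

Lemma inv_step_bin2S n : inv_step n 'C(n.+1, 2)%:R = 'C(n, 2)%:R.
Proof. by rewrite /inv_step !natr_bin2 -natr1; field; rewrite natr1 pnatr_eq0. Qed.

Lemma inv_step_bin2SS n : inv_step n 'C(n.+2, 2)%:R = 'C(n.+1, 2)%:R.
Proof. by rewrite /inv_step !natr_bin2 -!natr1; field; rewrite natr1 pnatr_eq0. Qed.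

Lemma inv_step_mono n : (0 < n)%N -> {mono inv_step n : x y / x <= y}.
Proof.
move=> n_gt0 x y; rewrite /inv_step lerD2r ler_pM2l //.
by rewrite divr_gt0 ?ltr0n.
Qed.

Lemma inv_next n rho : rho != 0 ->
  (rho / (1 - alpha n.+1 rho))^-1 = inv_step n rho^-1.
Proof.
move=> rho_neq0; rewrite invf_div /alpha /inv_step -natr1.
by field; rewrite rho_neq0 natr1 pnatr_eq0.
Qed.

Lemma lt_alphaS n rho : (0 < n)%N -> 0 < rho ->
  'C(n.+1, 2)%:R < rho^-1 -> rho < alpha n.+1 rho.
Proof.
move=> n_gt0 rho_gt0; rewrite natr_bin2 /alpha -natr1 addrK.
rewrite -(ltr_pM2l rho_gt0) mulfV ?gt_eqF // => rho_small.
have n_ge1 : 1 <= n%:R :> R by rewrite ler1n.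
rewrite -subr_gt0.
have -> : (n%:R + 1)^-1 + rho * n%:R / 2 - rho
    = (2 - rho * (2 - n%:R) * (n%:R + 1)) / (2 * (n%:R + 1)) :> R.
  by field; lra.
have cross_ge0 : 0 <= rho * (n%:R + 1) * (n%:R - 1).
  by apply: mulr_ge0; [apply: mulr_ge0|]; lra.
apply: divr_gt0; nra.
Qed.

Lemma beta_next n rho : (0 < n)%N ->
  alpha n.+1 rho != 0 -> alpha n.+1 rho != 1 ->
  beta n (rho / (1 - alpha n.+1 rho)) = ((alpha n.+1 rho)^-1 - 1)^-1.
Proof.
move=> n_gt0 a_neq0 a_neq1.
have n_neq0 : n%:R != 0 :> R by rewrite pnatr_eq0 -lt0n.
have nS_neq0 : n%:R + 1 != 0 :> R by rewrite natr1 pnatr_eq0.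
have rhoE : rho = 2 * ((n%:R + 1) * alpha n.+1 rho - 1) / (n%:R * (n%:R + 1)).
  by rewrite /alpha -(natr1 n) addrK; field; rewrite n_neq0 nS_neq0.
set a := alpha n.+1 rho in a_neq0 a_neq1 rhoE *.
rewrite /beta rhoE; field.
by rewrite a_neq0 mulN1r subr_eq0 eq_sym a_neq1 nS_neq0 n_neq0.
Qed.

Lemma alphaD_beta n rho : alpha n rho + rho = beta n rho.
Proof. by rewrite /alpha /beta -addrA; congr (_ + _); field. Qed.

End Recursion.

Theorem lemma2 (R : realFieldType) (j : nat) (rho : R) :
  (1 <= j)%N -> 0 < rho -> in_I j.+1 rho ->
  let rho' := rho / (1 - alpha j.+1 rho) in
  [/\ rho < alpha j.+1 rho,
      in_I j rho',
      beta j rho' = ((alpha j.+1 rho)^-1 - 1)^-1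
    & alpha j.+1 rho + rho = beta j.+1 rho].
Proof.
move=> j_gt0 rho_gt0 /(in_I_invE _ rho_gt0)/andP[lo hi] rho'.
have rho'_inv : rho'^-1 = inv_step j rho^-1 by rewrite inv_next ?gt_eqF.
have /andP[lo' hi'] : 'C(j, 2)%:R < rho'^-1 <= 'C(j.+1, 2)%:R.
  rewrite rho'_inv -(inv_step_bin2SS j) -(inv_step_bin2S j).
  by rewrite (leW_mono (inv_step_mono j_gt0)) (inv_step_mono j_gt0) ?lo.
have rho'_gt0 : 0 < rho' by rewrite -invr_gt0 (le_lt_trans (ler0n _ _) lo').
have one_sub_alpha_gt0 : 0 < 1 - alpha j.+1 rho.
  by move: rho'_gt0; rewrite /rho' pmulr_rgt0 // invr_gt0.
have rho_lt_alpha := lt_alphaS j_gt0 rho_gt0 lo.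
split=> //; last exact: alphaD_beta.
- by apply/(in_I_invE _ rho'_gt0); rewrite lo'.
- by apply: beta_next; rewrite // ?lt0r_neq0 ?lt_eqF //; lra.
Qed.
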